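(* Let $r=\frac{2}{3\sqrt{3}}$. Then $$\mathcal{P}^3=\{c_1+c_4\mathbf{j_1}+c_6\mathbf{j_2} : c_1,c_4,c_6\in\mathbb{R},\ |c_1|+|c_4|+|c_6|\leq r\};$$ that is, under the identification $c_1+c_4\mathbf{j_1}+c_6\mathbf{j_2}\leftrightarrow(c_1,c_4,c_6)\in\mathbb{R}^3$, the Perplexbric is the regular octahedron centered at the origin with vertices $\pm r$ on the coordinate axes, whose edges have length $\frac{2\sqrt{2}}{3\sqrt{3}}$.
   Context: The tricomplex numbers $\mathbb{M}(3)$ form the commutative real algebra generated by commuting units $\mathbf{i_1},\mathbf{i_2},\mathbf{i_3}$ with $\mathbf{i_k}^2=-1$; set $\mathbf{j_1}=\mathbf{i_1}\mathbf{i_2}$, $\mathbf{j_2}=\mathbf{i_1}\mathbf{i_3}$, $\mathbf{j_3}=\mathbf{i_2}\mathbf{i_3}$, $\mathbf{i_4}=\mathbf{i_1}\mathbf{i_2}\mathbf{i_3}$, with real basis $1,\mathbf{i_1},\mathbf{i_2},\mathbf{i_3},\mathbf{i_4},\mathbf{j_1},\mathbf{j_2},\mathbf{j_3}$ and Euclidean norm on coordinates. For $c\in\mathbb{M}(3)$, $Q_{3,c}(\eta)=\eta^3+c$ and $Q_{3,c}^m$ is its $m$-fold iterate. The Perplexbric is $\mathcal{P}^3=\{c=c_1+c_4\mathbf{j_1}+c_6\mathbf{j_2} : c_1,c_4,c_6\in\mathbb{R},\ (Q_{3,c}^m(0))_{m\geq1}\text{ bounded}\}$. *)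

From Stdlib Require Import Reals Lra.
Open Scope R_scope.

(* Tricomplex numbers M(3): the real algebra with basis e_S, S a subset of
   {1,2,3}, encoded as a boolean triple (s1,s2,s3); e_S = prod_{k in S} i_k.
   So 1 = e_{}, i1 = e_{1}, i2 = e_{2}, i3 = e_{3}, j1 = i1 i2 = e_{12},
   j2 = i1 i3 = e_{13}, j3 = i2 i3 = e_{23}, i4 = i1 i2 i3 = e_{123}.
   Since the i_k commute and i_k^2 = -1, e_S e_T = (-1)^{|S /\ T|} e_{S xor T}. *)
Definition idx : Type := (bool * bool * bool)%type.

Definition M3 : Type := idx -> R.

Definition all_idx : list idx :=
  (false,false,false) :: (true,false,false) :: (false,true,false) ::
  (false,false,true) :: (true,true,false) :: (true,false,true) ::
  (false,true,true) :: (true,true,true) :: nil.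

Definition idx_xor (s t : idx) : idx :=
  match s, t with
  | (a1,a2,a3), (b1,b2,b3) => (xorb a1 b1, xorb a2 b2, xorb a3 b3)
  end.

Definition idx_sign (s t : idx) : R :=
  match s, t with
  | (a1,a2,a3), (b1,b2,b3) =>
      (if andb a1 b1 then -1 else 1) * (if andb a2 b2 then -1 else 1)
      * (if andb a3 b3 then -1 else 1)
  end.

Definition sum_idx (f : idx -> R) : R :=
  List.fold_right (fun s acc => f s + acc) 0 all_idx.

Definition M3_add (x y : M3) : M3 := fun k => x k + y k.

Definition M3_mul (x y : M3) : M3 :=
  fun k => sum_idx (fun s => idx_sign s (idx_xor s k) * x s * y (idx_xor s k)).

Definition M3_zero : M3 := fun _ => 0.

Definition M3_norm (x : M3) : R := sqrt (sum_idx (fun s => x s ^ 2)).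

Definition Q3 (c eta : M3) : M3 := M3_add (M3_mul eta (M3_mul eta eta)) c.

Fixpoint Q3_iter (c : M3) (m : nat) : M3 :=
  match m with
  | O => M3_zero
  | S m' => Q3 c (Q3_iter c m')
  end.

Definition bounded_orbit (c : M3) : Prop :=
  exists B : R, forall m : nat, (1 <= m)%nat -> M3_norm (Q3_iter c m) <= B.

(* the element c1 + c4 j1 + c6 j2 *)
Definition perplex_pt (c1 c4 c6 : R) : M3 :=
  fun k => match k with
           | (false,false,false) => c1
           | (true,true,false) => c4
           | (true,false,true) => c6
           | _ => 0
           end.

Definition in_Perplexbric (c1 c4 c6 : R) : Prop :=
  bounded_orbit (perplex_pt c1 c4 c6).

(* The span of 1, j1, j2 and j1 j2 = -j3 is a copy of R^4: it is
   spanned by four orthogonal idempotents, and multiplication is coordinatewise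
   there.  A parameter c1 + c4 j1 + c6 j2 has coordinates c1 ± c4 ± c6, so its
   orbit under eta^3 + c is bounded iff each real orbit x^3 + (c1 ± c4 ± c6) is.
   The real orbit of x^3 + a is bounded iff |a| <= 2/(3 sqrt 3): with p = 1/sqrt 3,
   x^3 + 2p/3 is tangent to the diagonal at p, so for |a| <= 2p/3 the interval
   [-p, p] is invariant, while for a > 2p/3 every step increases x by at least
   a - 2p/3.  Finally, the four bounds |c1 ± c4 ± c6| <= r together say exactly
   |c1| + |c4| + |c6| <= r. *)
From Stdlib Require Import Reals Lra FunctionalExtensionality.
Open Scope R_scope.

Fixpoint cubic_orbit (a : R) (n : nat) : R :=
  match n with O => 0 | S m => cubic_orbit a m ^ 3 + a end.

Definition bounded_seq (u : nat -> R) : Prop := exists B, forall n, Rabs (u n) <= B.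

Lemma cubic_orbit_opp a n : cubic_orbit (- a) n = - cubic_orbit a n.
Proof. induction n as [|n IH]; simpl; [ring | rewrite IH; ring]. Qed.

Section CubicOrbit.

Variable p : R.
Hypothesis p_pos : 0 < p.
Hypothesis p_sq : p * p = 1 / 3.

Lemma le_cube_add_tangent x : 0 <= x -> x <= x ^ 3 + 2 * p / 3.
Proof.
  intros Hx.
  assert (Htangent :
    (x - p) ^ 2 * (x + 2 * p) = x ^ 3 - 3 * (p * p) * x + 2 * p * (p * p)) by ring.
  rewrite p_sq in Htangent.
  assert (0 <= (x - p) ^ 2 * (x + 2 * p)).
  { apply Rmult_le_pos; [apply pow2_ge_0 | lra]. }
  lra.
Qed.

Lemma cubic_orbit_abs_le a n : Rabs a <= 2 * p / 3 -> Rabs (cubic_orbit a n) <= p.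
Proof.
  intros Ha; induction n as [|n IH]; cbn [cubic_orbit].
  - rewrite Rabs_R0; lra.
  - assert (Hcube : Rabs (cubic_orbit a n ^ 3) <= p / 3).
    { rewrite <- RPow_abs.
      replace (p / 3) with (p ^ 3)
        by (replace (p ^ 3) with (p * (p * p)) by ring; rewrite p_sq; field).
      apply pow_incr; split; [apply Rabs_pos | exact IH]. }
    pose proof (Rabs_triang (cubic_orbit a n ^ 3) a); lra.
Qed.

Lemma cubic_orbit_linear_growth a n :
  2 * p / 3 <= a -> INR n * (a - 2 * p / 3) <= cubic_orbit a n.
Proof.
  intros Ha; induction n as [|n IH]; cbn [cubic_orbit].
  - simpl; lra.
  - assert (0 <= INR n * (a - 2 * p / 3)) by (apply Rmult_le_pos; [apply pos_INR | lra]).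
    pose proof (le_cube_add_tangent (cubic_orbit a n) ltac:(lra)).
    rewrite S_INR; lra.
Qed.

Lemma cubic_orbit_unbounded a : 2 * p / 3 < Rabs a -> ~ bounded_seq (cubic_orbit a).
Proof.
  assert (Hpos : forall b, 2 * p / 3 < b -> ~ bounded_seq (cubic_orbit b)).
  { intros b Hb [B HB].
    destruct (INR_archimed (b - 2 * p / 3) B) as [n Hn]; [lra |].
    pose proof (cubic_orbit_linear_growth b n ltac:(lra)).
    pose proof (Rle_abs (cubic_orbit b n)).
    specialize (HB n); lra. }
  unfold Rabs; destruct Rcase_abs; intros Ha.
  - intros [B HB]; apply (Hpos (- a)); [lra |].
    exists B; intros n; rewrite cubic_orbit_opp, Rabs_Ropp; apply HB.
  - exact (Hpos a Ha).
Qed.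

Lemma cubic_orbit_bounded_iff a : bounded_seq (cubic_orbit a) <-> Rabs a <= 2 * p / 3.
Proof.
  split.
  - intros Hbd; apply Rnot_lt_le; intros Ha; exact (cubic_orbit_unbounded a Ha Hbd).
  - intros Ha; exists p; intros n; exact (cubic_orbit_abs_le a n Ha).
Qed.

End CubicOrbit.

(* y1 e1 + y2 e2 + y3 e3 + y4 e4, where e1, ..., e4 are the idempotents
   (1 ± j1 ± j2 ± j1 j2) / 4, with j1 j2 = -j3. *)
Definition idem4 (y1 y2 y3 y4 : R) : M3 :=
  fun k => match k with
           | (false,false,false) => (y1 + y2 + y3 + y4) / 4
           | (true,true,false) => (y1 + y2 - y3 - y4) / 4
           | (true,false,true) => (y1 - y2 + y3 - y4) / 4
           | (false,true,true) => - (y1 - y2 - y3 + y4) / 4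
           | _ => 0
           end.

Lemma M3_zero_idem4 : M3_zero = idem4 0 0 0 0.
Proof.
  apply functional_extensionality; intros [[[|][|]][|]];
    unfold M3_zero, idem4; field.
Qed.

Lemma perplex_pt_idem4 c1 c4 c6 :
  perplex_pt c1 c4 c6 = idem4 (c1 + c4 + c6) (c1 + c4 - c6) (c1 - c4 + c6) (c1 - c4 - c6).
Proof.
  apply functional_extensionality; intros [[[|][|]][|]];
    unfold perplex_pt, idem4; field.
Qed.

Lemma M3_add_idem4 x1 x2 x3 x4 y1 y2 y3 y4 :
  M3_add (idem4 x1 x2 x3 x4) (idem4 y1 y2 y3 y4)
  = idem4 (x1 + y1) (x2 + y2) (x3 + y3) (x4 + y4).
Proof.
  apply functional_extensionality; intros [[[|][|]][|]];
    unfold M3_add, idem4; field.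
Qed.

Lemma M3_mul_idem4 x1 x2 x3 x4 y1 y2 y3 y4 :
  M3_mul (idem4 x1 x2 x3 x4) (idem4 y1 y2 y3 y4)
  = idem4 (x1 * y1) (x2 * y2) (x3 * y3) (x4 * y4).
Proof.
  apply functional_extensionality; intros [[[|][|]][|]];
    unfold M3_mul, sum_idx, idem4; simpl; field.
Qed.

Lemma Q3_iter_perplex c1 c4 c6 n :
  Q3_iter (perplex_pt c1 c4 c6) n =
  idem4 (cubic_orbit (c1 + c4 + c6) n) (cubic_orbit (c1 + c4 - c6) n)
        (cubic_orbit (c1 - c4 + c6) n) (cubic_orbit (c1 - c4 - c6) n).
Proof.
  induction n as [|n IH]; simpl.
  - exact M3_zero_idem4.
  - unfold Q3; rewrite IH, perplex_pt_idem4, !M3_mul_idem4, M3_add_idem4.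
    f_equal; ring.
Qed.

(* The idempotents e_k are orthogonal, each of squared norm 1/4. *)
Lemma M3_norm_idem4 y1 y2 y3 y4 :
  M3_norm (idem4 y1 y2 y3 y4) = sqrt ((y1 ^ 2 + y2 ^ 2 + y3 ^ 2 + y4 ^ 2) / 4).
Proof. unfold M3_norm, sum_idx, idem4; simpl; f_equal; field. Qed.

Lemma bounded_orbit_iff_all c :
  bounded_orbit c <-> exists B, forall m, M3_norm (Q3_iter c m) <= B.
Proof.
  split; intros [B HB].
  - exists (Rmax B 0); intros [|m].
    + cbn [Q3_iter]; rewrite M3_zero_idem4, M3_norm_idem4.
      replace (_ / 4) with 0 by field; rewrite sqrt_0; apply Rmax_r.
    + eapply Rle_trans; [apply HB; apply le_n_S, le_0_n | apply Rmax_l].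
  - exists B; intros m _; apply HB.
Qed.

Lemma abs_le_M3_norm_idem4 y1 y2 y3 y4 y :
  y ^ 2 <= y1 ^ 2 + y2 ^ 2 + y3 ^ 2 + y4 ^ 2 -> Rabs y <= 2 * M3_norm (idem4 y1 y2 y3 y4).
Proof.
  intros Hy; rewrite M3_norm_idem4.
  assert (Hsum : 0 <= (y1 ^ 2 + y2 ^ 2 + y3 ^ 2 + y4 ^ 2) / 4).
  { pose proof (pow2_ge_0 y1); pose proof (pow2_ge_0 y2);
      pose proof (pow2_ge_0 y3); pose proof (pow2_ge_0 y4); lra. }
  pose proof (sqrt_pos ((y1 ^ 2 + y2 ^ 2 + y3 ^ 2 + y4 ^ 2) / 4)).
  apply Rsqr_incr_0_var; [| lra].
  rewrite <- Rsqr_abs, Rsqr_mult, Rsqr_sqrt by exact Hsum.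
  unfold Rsqr; simpl in *; lra.
Qed.

Lemma bounded_idem4_iff u1 u2 u3 u4 :
  (exists B, forall n, M3_norm (idem4 (u1 n) (u2 n) (u3 n) (u4 n)) <= B) <->
  bounded_seq u1 /\ bounded_seq u2 /\ bounded_seq u3 /\ bounded_seq u4.
Proof.
  split.
  - intros [B HB].
    repeat split; exists (2 * B); intros n;
      (apply Rle_trans with (2 * M3_norm (idem4 (u1 n) (u2 n) (u3 n) (u4 n)));
      [ apply abs_le_M3_norm_idem4;
        pose proof (pow2_ge_0 (u1 n)); pose proof (pow2_ge_0 (u2 n));
        pose proof (pow2_ge_0 (u3 n)); pose proof (pow2_ge_0 (u4 n)); lra
      | pose proof (HB n); lra ]).
  - intros [[B1 H1] [[B2 H2] [[B3 H3] [B4 H4]]]].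
    assert (Hsq : forall (u : nat -> R) B n,
               (forall n, Rabs (u n) <= B) -> u n ^ 2 <= B ^ 2).
    { intros u B n Hu; rewrite <- pow2_abs.
      apply pow_incr; split; [apply Rabs_pos | apply Hu]. }
    exists (sqrt ((B1 ^ 2 + B2 ^ 2 + B3 ^ 2 + B4 ^ 2) / 4)); intros n.
    rewrite M3_norm_idem4; apply sqrt_le_1_alt.
    pose proof (Hsq u1 B1 n H1); pose proof (Hsq u2 B2 n H2);
      pose proof (Hsq u3 B3 n H3); pose proof (Hsq u4 B4 n H4); lra.
Qed.

Lemma abs_signed_sums_le a b c r :
  Rabs (a + b + c) <= r /\ Rabs (a + b - c) <= r /\
  Rabs (a - b + c) <= r /\ Rabs (a - b - c) <= r <->
  Rabs a + Rabs b + Rabs c <= r.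
Proof. unfold Rabs; repeat destruct Rcase_abs; lra. Qed.

Theorem mainTheorem18 : forall c1 c4 c6 : R,
  in_Perplexbric c1 c4 c6 <->
  Rabs c1 + Rabs c4 + Rabs c6 <= 2 / (3 * sqrt 3).
Proof.
  intros c1 c4 c6.
  assert (Hsqrt3 : 0 < sqrt 3) by (apply sqrt_lt_R0; lra).
  assert (Hp_pos : 0 < / sqrt 3) by (apply Rinv_0_lt_compat, Hsqrt3).
  assert (Hp_sq : / sqrt 3 * / sqrt 3 = 1 / 3)
    by (rewrite <- Rinv_mult, sqrt_sqrt by lra; field).
  replace (2 / (3 * sqrt 3)) with (2 * / sqrt 3 / 3) by (field; lra).
  unfold in_Perplexbric; rewrite bounded_orbit_iff_all.
  setoid_rewrite Q3_iter_perplex.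
  rewrite bounded_idem4_iff, <- abs_signed_sums_le,
    !(cubic_orbit_bounded_iff _ Hp_pos Hp_sq).
  reflexivity.
Qed.
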